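(* The bounded orbits of $\Phi_{\mathrm{Id}}\colon\mathrm{M}\mapsto\mathrm{M}^2$ on $\mathcal{M}(2;\mathbb{C})$ are contained in $\overline{\mathrm{W}^s_{\mathrm{Id}}(\mathbf{0})}$; every element $\mathrm{M}$ of $\overline{\mathrm{W}^s_{\mathrm{Id}}(\mathbf{0})}$ has a bounded orbit, except the matrices whose Jordan form is $\begin{bmatrix}\lambda&1\\0&\lambda\end{bmatrix}$ with $|\lambda|=1$.
   Context: $\mathrm{W}^s_{\mathrm{Id}}(\mathbf{0})=\{\mathrm{M}\in\mathcal{M}(2;\mathbb{C}):\Phi_{\mathrm{Id}}^k(\mathrm{M})\to\mathbf{0}\text{ as }k\to\infty\}$, where $\mathbf{0}$ is the zero matrix; the bar denotes topological closure. *)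

From HB Require Import structures.
From mathcomp Require Import all_boot all_order all_algebra.
From mathcomp Require Import all_classical all_reals all_analysis.
From mathcomp Require Import complex.
Set Implicit Arguments. Unset Strict Implicit. Unset Printing Implicit Defensive.
Import Order.TTheory GRing.Theory Num.Theory.
Import numFieldTopology.Exports numFieldNormedType.Exports.
Local Open Scope ring_scope.
Local Open Scope classical_set_scope.

(* The complex numbers C = R[i] over a realType R (e.g. the reals),
   viewed as a numClosedFieldType so that MathComp-Analysis' generic
   topology/norm instances apply to C and to matrices over C. *)
Definition C (R : realType) : numClosedFieldType := R[i].

Definition Phi_Id (R : realType) (M : 'M[C R]_2) : 'M[C R]_2 := M *m M.

Definition orbit_Id (R : realType) (M : 'M[C R]_2) : set 'M[C R]_2 :=
  range (fun k : nat => iter k (@Phi_Id R) M).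

Definition Ws_Id (R : realType) : set 'M[C R]_2 :=
  [set M | (fun k : nat => iter k (@Phi_Id R) M) @ \oo --> (0 : 'M[C R]_2)].

Definition jordan_block2 (R : realType) (l : C R) : 'M[C R]_2 :=
  \matrix_(i < 2, j < 2)
    (if i == j then l else if (i == 0) && (j == 1) then 1 else 0).

Definition has_jordan_form_block (R : realType) (M : 'M[C R]_2) (l : C R) :=
  exists P : 'M[C R]_2, P \in unitmx /\ M = P *m jordan_block2 l *m invmx P.

From HB Require Import structures.
From mathcomp Require Import all_boot all_order all_algebra.
From mathcomp Require Import all_classical all_reals all_analysis.
From mathcomp Require Import complex ring.
Import Order.TTheory GRing.Theory Num.Theory.
Import numFieldTopology.Exports numFieldNormedType.Exports.
Local Open Scope ring_scope.
Local Open Scope classical_set_scope.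
Set Implicit Arguments. Unset Strict Implicit. Unset Printing Implicit Defensive.

(* Let a, c be the eigenvalues of M. By Cayley-Hamilton,
   M^n = a^n I + h_{n-1}(a, c) (M - a I) with h_{n-1}(a, c) = sum_(i<n) a^i c^(n-1-i).
   Iterating Phi_Id gives the powers M^(2^k), and on an eigenvector these grow
   like |a|^(2^k); so a bounded orbit, or membership in W^s_Id(0), forces
   |a|, |c| <= 1.  The same bound passes to the closure of W^s_Id(0) because
   det N - a tr N + a^2 = (a - m1)(a - m2) depends continuously on N.
   Conversely, if |a|, |c| <= 1 then t M lies in W^s_Id(0) for 0 <= t < 1,
   since its spectrum is in the disc of radius t, whence M is in the closure.
   Finally h_{n-1}(a, c) is bounded unless a = c with |a| = 1, where it equals
   n a^(n-1): then the orbit is bounded iff M = a I, and otherwise M is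
   similar to the Jordan block. *)

Section Matrix2.
Variable K : comNzRingType.
Implicit Types A B : 'M[K]_2.

Lemma lift0_ord2 : lift ord0 ord0 = 1 :> 'I_2.
Proof. exact: val_inj. Qed.

Lemma mx2_ext A B : A 0 0 = B 0 0 -> A 0 1 = B 0 1 -> A 1 0 = B 1 0 ->
  A 1 1 = B 1 1 -> A = B.
Proof.
have ord2 (i : 'I_2) : i = 0 \/ i = 1.
  by case: i => [[|[|//]] ?]; [left | right]; apply: val_inj.
move=> e00 e01 e10 e11; apply/matrixP => i j.
by case: (ord2 i) => ->; case: (ord2 j) => ->.
Qed.

Lemma mulmx2E A B i j : (A *m B) i j = A i 0 * B 0 j + A i 1 * B 1 j.
Proof. by rewrite mxE !big_ord_recl big_ord0 addr0 lift0_ord2. Qed.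

Lemma mxtrace2 A : \tr A = A 0 0 + A 1 1.
Proof. by rewrite /mxtrace !big_ord_recl big_ord0 addr0 lift0_ord2. Qed.

Lemma det_mx2 A : \det A = A 0 0 * A 1 1 - A 0 1 * A 1 0.
Proof.
rewrite (expand_det_row A 0) !big_ord_recl big_ord0 addr0 /cofactor.
rewrite lift0_ord2 !det_mx11 !mxE.
have -> : lift 0 0 = 1 :> 'I_2 by exact: val_inj.
have -> : lift 1 0 = 0 :> 'I_2 by exact: val_inj.
by rewrite /= expr0 expr1 mul1r mulN1r mulrN.
Qed.

(* [a] and [c] are the roots, with multiplicity, of X^2 - \tr A X + \det A. *)
Definition spectrum2 A (a c : K) := a + c = \tr A /\ a * c = \det A.

Lemma spectrum2C A a c : spectrum2 A a c -> spectrum2 A c a.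
Proof. by rewrite /spectrum2 addrC mulrC. Qed.

Lemma Cayley_Hamilton2 A a c : spectrum2 A a c -> (A - a%:M) *m (A - c%:M) = 0.
Proof.
rewrite /spectrum2 mxtrace2 det_mx2 => -[tr_ac det_ac].
have -> : c = A 0 0 + A 1 1 - a by rewrite -tr_ac; ring.
have char0 : a * (A 0 0 + A 1 1 - a) - (A 0 0 * A 1 1 - A 0 1 * A 1 0) = 0.
  by rewrite -tr_ac -det_ac; ring.
by apply: mx2_ext; rewrite mulmx2E !mxE /= ?mulr1n ?mulr0n ?subr0;
  first [ring | apply: etrans char0; ring].
Qed.

End Matrix2.

Lemma spectrum2_exists (F : numClosedFieldType) (A : 'M[F]_2) :
  exists a c, spectrum2 A a c.
Proof.
set t := \tr A; set s := sqrtC (t ^+ 2 - 4 * \det A).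
have s2 : s ^+ 2 = t ^+ 2 - 4 * \det A by rewrite sqrtCK.
exists ((t + s) / 2), ((t - s) / 2); split; first by field.
have -> : (t + s) / 2 * ((t - s) / 2) = (t ^+ 2 - s ^+ 2) / 4 by field.
by rewrite s2; field.
Qed.

Lemma eigenvalue_mx2 (F : fieldType) (A : 'M[F]_2) a c :
  spectrum2 A a c -> eigenvalue A a.
Proof.
move=> sp; have CH := Cayley_Hamilton2 (spectrum2C sp).
have [Ac0 | Ac_neq0] := eqVneq (A - c%:M) 0.
  have Ac : A = c%:M by apply/eqP; rewrite -subr_eq0 Ac0.
  have ac : a = c.
    by case: sp => + _; rewrite Ac mxtrace_scalar mulr2n => /addIr.
  apply/eigenvalueP; exists (const_mx 1); first by rewrite Ac ac mul_mx_scalar.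
  by apply/eqP => /matrixP/(_ 0 0); rewrite !mxE; apply/eqP; exact: oner_neq0.
apply: (contraNneq _ Ac_neq0) => /eqP eig0.
apply/eqP/(@submx0null _ _ 2); move/eqP: eig0 => <-; apply/eigenspaceP.
by apply/eqP; rewrite -subr_eq0 -mul_mx_scalar -mulmxBr CH.
Qed.

Section PowerFormula.
Variable K : comNzRingType.

(* h_{n-1}(a, c) = sum_(i < n) a^i c^(n-1-i), i.e. (a^n - c^n) / (a - c). *)
Fixpoint hsym (a c : K) n := if n is n'.+1 then a ^+ n' + c * hsym a c n' else 0.

Lemma hsym_mulB a c n : hsym a c n * (a - c) = a ^+ n - c ^+ n.
Proof.
elim: n => [|n IH] /=; first by rewrite mul0r !expr0 subrr.
by rewrite mulrDl -mulrA IH !exprS; ring.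
Qed.

Lemma hsym_diag a n : hsym a a n.+1 = n.+1%:R * a ^+ n.
Proof.
elim: n => [|n IH]; first by rewrite /= mulr0 addr0 expr0 mulr1.
rewrite (_ : hsym a a n.+2 = a ^+ n.+1 + a * hsym a a n.+1) // IH exprS.
by rewrite -[n.+2%:R]natr1 -[n.+1%:R]natr1; ring.
Qed.

Lemma mx_pow_hsym m (A : 'M[K]_m.+1) a c : (A - c%:M) *m (A - a%:M) = 0 ->
  forall n, A ^+ n = (a ^+ n)%:M + hsym a c n *: (A - a%:M).
Proof.
move=> CH; have AN : A *m (A - a%:M) = c *: (A - a%:M).
  by apply/eqP; rewrite -subr_eq0 -mul_scalar_mx -mulmxBl CH.
elim=> [|n IH]; first by rewrite expr0 scale0r addr0.
rewrite exprS IH -mulmxE mulmxDr -scalemxAr AN mul_mx_scalar.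
apply/matrixP => i j; rewrite !mxE.
by case: (i == j); rewrite /= ?mulr1n ?mulr0n ?exprS; ring.
Qed.

End PowerFormula.

Lemma mx_conj_pow (K : comUnitRingType) n (P A : 'M[K]_n.+1) k :
  P \in unitmx -> (P *m A *m invmx P) ^+ k = P *m A ^+ k *m invmx P.
Proof.
move=> Pu; elim: k => [|k IH]; first by rewrite !expr0 mulmx1 mulmxV.
by rewrite !exprS IH -!mulmxE !mulmxA mulmxKV.
Qed.

Section NormEstimates.
Variable K : numDomainType.

Lemma mx_norm_entry_le m n (A : 'M[K]_(m, n)) i j : `|A i j| <= `|A|.
Proof.
rewrite [leRHS]/Num.Def.normr /= mx_normE -[leLHS]nngE num_le.
exact: (le_bigmax _ (fun ij : 'I_m * 'I_n => `|A ij.1 ij.2|%:nng) (i, j)).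
Qed.

Lemma mx_norm_le m n (A : 'M[K]_(m, n)) b : 0 <= b ->
  (forall i j, `|A i j| <= b) -> `|A| <= b.
Proof.
move=> b0 Ab; rewrite [leLHS]/Num.Def.normr /= mx_normE.
rewrite -[b]/((NngNum b0)%:num) num_le; apply/bigmax_leP; split => // ij _.
by rewrite -num_le /=.
Qed.

Lemma mulmx_norm_le m n p (A : 'M[K]_(m, n)) (B : 'M[K]_(n, p)) :
  `|A *m B| <= `|A| * `|B| *+ n.
Proof.
apply: mx_norm_le => [|i j]; first by rewrite mulrn_wge0 // mulr_ge0.
rewrite mxE; apply: le_trans (ler_norm_sum _ _ _) _.
rewrite -[n in _ *+ n]card_ord -sumr_const; apply: ler_sum => k _.
by rewrite normrM ler_pM // mx_norm_entry_le.
Qed.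

Lemma scalar_mx_norm_le n (a : K) : `|a%:M : 'M[K]_n| <= `|a|.
Proof.
apply: mx_norm_le => // i j; rewrite mxE.
by case: (i == j); rewrite /= ?mulr1n ?mulr0n ?normr0.
Qed.

Lemma mx_pow_norm_le m (A : 'M[K]_m.+1) a c : (A - c%:M) *m (A - a%:M) = 0 ->
  forall n, `|A ^+ n| <= `|a| ^+ n + `|hsym a c n| * `|A - a%:M|.
Proof.
move=> CH n; rewrite (mx_pow_hsym CH); apply: le_trans (ler_normD _ _) _.
by rewrite mx_normZ lerD // -normrX scalar_mx_norm_le.
Qed.

Lemma bernoulli_le (h : K) n : 0 <= h -> 1 + n%:R * h <= (1 + h) ^+ n.
Proof.
move=> h0; elim: n => [|n IH]; first by rewrite mul0r addr0 expr0.
rewrite exprS; apply: le_trans (ler_wpM2l (addr_ge0 ler01 h0) IH).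
have -> : (1 + h) * (1 + n%:R * h) = 1 + n.+1%:R * h + n%:R * h ^+ 2.
  by rewrite -natr1; ring.
by rewrite lerDl mulr_ge0 // exprn_ge0.
Qed.

Lemma hsym_norm_le (a c r : K) n : `|a| <= r -> `|c| <= r ->
  `|hsym a c n.+1| <= n.+1%:R * r ^+ n.
Proof.
move=> ar cr; have r0 : 0 <= r := le_trans (normr_ge0 a) ar.
elim: n => [|n IH]; first by rewrite /= mulr0 addr0 expr0 normr1 mulr1.
rewrite (_ : hsym a c n.+2 = a ^+ n.+1 + c * hsym a c n.+1) //.
apply: le_trans (ler_normD _ _) _.
rewrite normrM normrX -[n.+2%:R]natr1 mulrDl mul1r [leRHS]addrC.
apply: lerD; first by rewrite lerXn2r ?nnegrE.
by rewrite exprS mulrCA ler_pM.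
Qed.

End NormEstimates.

Section FieldEstimates.
Variable K : numFieldType.

Lemma natmul_geo_bounded (r : K) : 0 <= r -> r < 1 ->
  exists B, forall n, n%:R * r ^+ n <= B.
Proof.
move=> r0 r1; have [<- | r_neq0] := eqVneq 0 r.
  by exists 1 => -[|n]; rewrite ?mul0r // expr0n /= mulr0.
have r_gt0 : 0 < r by rewrite lt_def eq_sym r_neq0.
have t0 : 0 < r^-1 - 1 by rewrite subr_gt0 invf_gt1.
exists (r^-1 - 1)^-1 => n.
have bern : r ^+ n * (1 + n%:R * (r^-1 - 1)) <= 1.
  have := ler_wpM2l (exprn_ge0 n r0) (bernoulli_le n (ltW t0)).
  by rewrite (_ : 1 + (r^-1 - 1) = r^-1) ?subrKC // -exprMn mulfV ?gt_eqF // expr1n.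
rewrite -[leRHS]mul1r ler_pdivlMr //; apply: le_trans bern.
by rewrite [leRHS]mulrDr mulr1 mulrCA mulrA lerDr exprn_ge0.
Qed.

Lemma hsym_bounded (a c : K) : `|a| <= 1 -> `|c| <= 1 -> a != c \/ `|a| < 1 ->
  exists B, forall n, `|hsym a c n| <= B.
Proof.
move=> a1 c1; have [<- [//|a_lt1] | a_neq_c _] := eqVneq a c.
  have [B aB] := natmul_geo_bounded (normr_ge0 a) a_lt1.
  exists (B + 1) => -[|n]; first by rewrite normr0 addr_ge0 // (le_trans _ (aB 0%N)) ?mul0r.
  rewrite hsym_diag normrM normrX ger0_norm // -natr1 mulrDl mul1r.
  by rewrite lerD // exprn_ile1.
have ac0 : 0 < `|a - c| by rewrite normr_gt0 subr_eq0.
exists (2 / `|a - c|) => n.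
rewrite -[hsym a c n](mulfK (_ : a - c != 0)) ?subr_eq0 // hsym_mulB.
rewrite normrM normfV ler_wpM2r ?invr_ge0 //.
apply: le_trans (ler_normB _ _) _; rewrite !normrX.
by rewrite -[2]/(1 + 1) lerD // exprn_ile1.
Qed.

Lemma eigenvalue_pow_norm_le m (A : 'M[K]_m.+1) a k :
  eigenvalue A a -> `|a| ^+ k <= `|A ^+ k| *+ m.+1.
Proof.
case/eigenvalueP => v vA v_neq0.
have vAk : v *m A ^+ k = a ^+ k *: v.
  elim: k => [|k IH]; first by rewrite !expr0 mulmx1 scale1r.
  by rewrite exprSr -mulmxE mulmxA IH -scalemxAl vA scalerA -exprSr.
have v_gt0 : 0 < `|v| by rewrite normr_gt0.
rewrite -(ler_pM2r v_gt0) -normrX -mx_normZ -vAk.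
by apply: le_trans (mulmx_norm_le _ _) _; rewrite mulrnAl mulrC.
Qed.

Lemma norm_le_cvg0 {T : Type} {F : set_system T} {FF : Filter F}
    {V : pseudoMetricNormedZmodType K} (f : T -> V) (g : T -> K) :
  (\forall t \near F, `|f t| <= g t) -> g @ F --> 0 -> f @ F --> 0.
Proof.
move=> fg /cvgr0Pnorm_lt g0; apply/cvgr0Pnorm_lt => e e0.
move: fg (g0 e e0); apply: filterS2 => t fgt gt.
by rewrite (le_lt_trans fgt) // -[g t]ger0_norm // (le_trans _ fgt).
Qed.

Lemma det_tr2_continuous (a : K) :
  continuous (fun N : 'M[K]_2 => \det N - a * \tr N).
Proof.
have -> : (fun N : 'M[K]_2 => \det N - a * \tr N) =
    (fun N => N 0 0 * N 1 1 - N 0 1 * N 1 0 - a * (N 0 0 + N 1 1)).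
  by apply: funext => N; rewrite det_mx2 mxtrace2.
move=> M; have FM : Filter (nbhs M) by apply: nbhs_filter.
have coordM i j := @coord_continuous K 2 2 i j M.
apply: (@cvgB _ _ _ _ FM); last apply: (@cvgMl_tmp _ _ _ FM).
  by apply: (@cvgB _ _ _ _ FM); apply: (@cvgM _ _ _ FM); exact: coordM.
by apply: (@cvgD _ _ _ _ FM); exact: coordM.
Qed.

Lemma closure_of_scaled (V : normedModType K) (S : set V) x :
  (forall t : K, 0 <= t -> t < 1 -> S (t *: x)) -> closure S x.
Proof.
move=> St B xB.
have := @scalel_continuous K V x 1; rewrite /continuous_at /= scale1r.
move=> /(_ B xB) /nbhs_ballP [e e0 eB].
have e1 : 0 < 1 + e by rewrite addr_gt0.
exists ((1 + e)^-1 *: x); split; last apply: eB.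
  by apply: St; rewrite ?invr_ge0 ?ltW // invf_lt1 // ltrDl.
rewrite -ball_normE /ball_ /= (_ : 1 - (1 + e)^-1 = e / (1 + e)).
  by rewrite gtr0_norm ?divr_gt0 // ltr_pdivrMr // ltr_pMr // ltrDl.
by field; rewrite lt0r_neq0.
Qed.

End FieldEstimates.

Section ComplexEstimates.
Variable R : realType.
Local Notation CC := (C R).

Lemma complex_archi (x : CC) : x \is Num.real -> exists n : nat, x < n%:R.
Proof.
case/complex_realP => k ->; exists (Num.bound `|k|).
rewrite -(rmorph_nat (real_complex R)) ltcR.
exact: le_lt_trans (ler_norm k) (archi_boundP (normr_ge0 k)).
Qed.

Lemma norm_le1_of_pow2_bounded (x : CC) B k0 :
  (forall k, (k0 <= k)%N -> `|x| ^+ (2 ^ k) <= B) -> `|x| <= 1.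
Proof.
move=> xB; have B0 : 0 <= B by apply: le_trans (xB k0 (leqnn _)).
rewrite real_leNgt ?normr_real //; apply/negP => x_gt1.
set h := `|x| - 1; have h0 : 0 < h by rewrite subr_gt0.
have [k1 Bk1] := complex_archi (ger0_real (divr_ge0 B0 (ltW h0))).
set k := maxn k0 k1.
have : (2 ^ k)%:R * h <= B.
  apply: le_trans (xB k (leq_maxl _ _)).
  rewrite -[`|x|](subrK 1) -/h addrC; apply: le_trans (bernoulli_le _ (ltW h0)).
  by rewrite lerDr.
rewrite -ler_pdivlMr // => kB.
have k1k : (k1%:R : CC) < (2 ^ k)%:R.
  by rewrite ltr_nat (leq_trans (ltn_expl k1 (isT : 1 < 2)%N)) // leq_pexp2l ?leq_maxr.
by have := lt_trans Bk1 (lt_le_trans k1k kB); rewrite ltxx.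
Qed.

Lemma geo_cvg0 (r : CC) : 0 <= r -> r < 1 -> r ^+ n @[n --> \oo] --> 0.
Proof.
move=> r0 r1; have [B rB] := natmul_geo_bounded r0 r1.
have B0 : 0 <= B by apply: le_trans (rB 0%N); rewrite mul0r.
apply/cvgr0Pnorm_lt => e e0.
have [N BN] := complex_archi (ger0_real (divr_ge0 B0 (ltW e0))).
exists N.+1 => // n /= Nn; rewrite ger0_norm ?exprn_ge0 //.
have n0 : 0 < n%:R :> CC by rewrite ltr0n (leq_trans _ Nn).
rewrite -(ltr_pM2l n0); apply: le_lt_trans (rB n) _.
by rewrite -ltr_pdivrMr // (lt_le_trans BN) // ler_nat ltnW.
Qed.

Lemma natmul_geo_cvg0 (r : CC) : 0 <= r -> r < 1 ->
  n%:R * r ^+ n @[n --> \oo] --> 0.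
Proof.
(* [n r^n = (n s^n) s^n] with [s = sqrt r], and [n s^n] is bounded. *)
move=> r0 r1; set s := sqrtC r.
have s0 : 0 <= s by rewrite sqrtC_ge0.
have s1 : s < 1 by rewrite -sqrtC1 ltr_sqrtC ?nnegrE.
have [B sB] := natmul_geo_bounded s0 s1.
apply: (@norm_le_cvg0 _ _ _ _ _ _ (fun n => B * s ^+ n)).
  exists 0%N => // n _ /=.
  rewrite ger0_norm ?mulr_ge0 ?exprn_ge0 // -(sqrtCK r) -/s -exprM mulnC exprM.
  by rewrite expr2 mulrA ler_wpM2r ?exprn_ge0.
by rewrite -(mulr0 B); apply: cvgMl_tmp; exact: geo_cvg0.
Qed.

Lemma mx_pow_cvg0 m (A : 'M[CC]_m.+1) a c r : (A - c%:M) *m (A - a%:M) = 0 ->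
  `|a| <= r -> `|c| <= r -> r < 1 -> A ^+ n @[n --> \oo] --> (0 : 'M[CC]_m.+1).
Proof.
move=> CH ar cr r1; have r0 : 0 <= r := le_trans (normr_ge0 a) ar.
set D := `|A - a%:M|; rewrite -(@cvg_shiftS _ (fun n => A ^+ n)).
apply: (@norm_le_cvg0 _ _ _ _ _ _ (fun n => (1 + D) * (n%:R * r ^+ n + r ^+ n))).
  exists 0%N => // n _ /=; apply: le_trans (mx_pow_norm_le CH n.+1) _.
  have hn : `|hsym a c n.+1| <= n%:R * r ^+ n + r ^+ n.
    by rewrite -{2}[r ^+ n]mul1r -mulrDl natr1 hsym_norm_le.
  have an : `|a| ^+ n.+1 <= r ^+ n.+1 by rewrite lerXn2r ?nnegrE.
  have rn : r ^+ n.+1 <= r ^+ n by rewrite exprS ler_piMl ?exprn_ge0 // ltW.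
  rewrite mulrDl mul1r lerD //; last by rewrite mulrC ler_wpM2l.
  by rewrite (le_trans an) // (le_trans rn) // lerDr mulr_ge0 ?exprn_ge0.
rewrite (_ : 0 = (1 + D) * (0 + 0)); last by rewrite addr0 mulr0.
by apply: cvgMl_tmp; apply: cvgD; [exact: natmul_geo_cvg0 | exact: geo_cvg0].
Qed.

End ComplexEstimates.

Section SquaringMap.
Variable R : realType.
Local Notation CC := (C R).
Implicit Types M : 'M[CC]_2.

Lemma iter_Phi_Id M k : iter k (@Phi_Id R) M = M ^+ (2 ^ k).
Proof.
elim: k => [|k IH] /=; first by rewrite expr1.
by rewrite IH /Phi_Id mulmxE -exprD expnS mul2n -addnn.
Qed.

Lemma bounded_orbit_IdP M :
  bounded_set (orbit_Id M) <-> exists B, forall k, `|M ^+ (2 ^ k)| <= B.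
Proof.
split=> [[B [_ MB]] | [B MB]].
  exists (B + 1) => k; apply: (MB (B + 1)); first by rewrite ltrDl.
  by exists k => //; rewrite iter_Phi_Id.
exists B; split; first exact: ger0_real (le_trans (normr_ge0 _) (MB 0%N)).
move=> x Bx _ [k _ <-]; rewrite iter_Phi_Id; exact: le_trans (MB k) (ltW Bx).
Qed.

Lemma Ws_Id_bounded M : Ws_Id M ->
  exists B k0, forall k, (k0 <= k)%N -> `|M ^+ (2 ^ k)| <= B.
Proof.
move=> /cvg_bounded /ex_bound [B [k0 _ MB]]; exists B, k0 => k k0k.
by rewrite -iter_Phi_Id; exact: MB.
Qed.

Lemma Ws_IdI M : M ^+ n @[n --> \oo] --> (0 : 'M[CC]_2) -> Ws_Id M.
Proof.
move=> /cvgr0Pnorm_lt M0; apply/cvgr0Pnorm_lt => e e0.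
have [N _ MN] := M0 e e0; exists N => // k /= Nk; rewrite iter_Phi_Id.
by apply: MN; rewrite /= (leq_trans Nk) // ltnW // ltn_expl.
Qed.

Lemma eigenvalue_norm_le1 M a B k0 :
  (forall k, (k0 <= k)%N -> `|M ^+ (2 ^ k)| <= B) -> eigenvalue M a -> `|a| <= 1.
Proof.
move=> MB eig; apply: (@norm_le1_of_pow2_bounded _ _ (B *+ 2) k0) => k k0k.
by apply: le_trans (eigenvalue_pow_norm_le _ eig) _; rewrite lerMn2r MB.
Qed.

Lemma bounded_orbit_spectrum_le1 M a c :
  bounded_set (orbit_Id M) -> spectrum2 M a c -> `|a| <= 1.
Proof.
move=> /bounded_orbit_IdP [B MB] /eigenvalue_mx2.
by apply: (@eigenvalue_norm_le1 _ _ B 0%N) => k _.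
Qed.

Lemma Ws_Id_spectrum_le1 M a c : Ws_Id M -> spectrum2 M a c -> `|a| <= 1.
Proof.
move=> /Ws_Id_bounded [B [k0 MB]] /eigenvalue_mx2.
exact: eigenvalue_norm_le1 MB.
Qed.

(* If [|a| > 1], then [\det N - a \tr N + a^2 = (a - m1) (a - m2)] stays away
   from [0] on [Ws_Id], while it vanishes at [M]. *)
Lemma closure_Ws_Id_spectrum_le1 M a c :
  closure (@Ws_Id R) M -> spectrum2 M a c -> `|a| <= 1.
Proof.
move=> clM [tr_ac det_ac]; rewrite real_leNgt ?normr_real //.
apply/negP => a_gt1; set d := `|a| - 1.
have d0 : 0 < d by rewrite subr_gt0.
have /cvgrPdist_lt /(_ _ (mulr_gt0 d0 d0)) := @det_tr2_continuous _ a M.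
move=> /clM [N [WsN /=]].
have [m1 [m2 spN]] := spectrum2_exists N.
have dm (m : CC) : `|m| <= 1 -> d <= `|a - m|.
  by move=> m_le1; apply: le_trans (lerB_dist a m); rewrite lerB.
have -> : \det M - a * \tr M - (\det N - a * \tr N) = - ((a - m1) * (a - m2)).
  by case: spN => <- <-; rewrite -tr_ac -det_ac; ring.
rewrite normrN normrM; apply/negP; rewrite -real_leNgt ?realM ?normr_real ?gtr0_real //.
apply: ler_pM (ltW d0) (ltW d0) (dm _ _) (dm _ _).
  exact: Ws_Id_spectrum_le1 WsN spN.
exact: Ws_Id_spectrum_le1 WsN (spectrum2C spN).
Qed.

Lemma scale_Ws_Id M a c t : spectrum2 M a c -> `|a| <= 1 -> `|c| <= 1 ->
  0 <= t -> t < 1 -> Ws_Id (t *: M).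
Proof.
move=> sp a1 c1 t0 t1; apply: Ws_IdI.
apply: (@mx_pow_cvg0 _ _ _ (t * a) (t * c) t) => //.
- have := Cayley_Hamilton2 (spectrum2C sp).
  rewrite -!scale_scalar_mx -!scalerBr -scalemxAl -scalemxAr => ->.
  by rewrite !scaler0.
- by rewrite normrM ger0_norm // ler_piMr.
- by rewrite normrM ger0_norm // ler_piMr.
Qed.

Lemma bounded_orbit_Id_closure M : bounded_set (orbit_Id M) -> closure (@Ws_Id R) M.
Proof.
move=> bM; have [a [c sp]] := spectrum2_exists M.
apply: closure_of_scaled => t t0 t1; apply: (scale_Ws_Id sp _ _ t0 t1).
  exact: bounded_orbit_spectrum_le1 sp.
exact: bounded_orbit_spectrum_le1 (spectrum2C sp).
Qed.

Lemma jordan_block2_pow (l : CC) k : (jordan_block2 l ^+ k) 0 1 = hsym l l k.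
Proof.
have sp : spectrum2 (jordan_block2 l) l l.
  by rewrite /spectrum2 mxtrace2 det_mx2 !mxE /= mulr0 subr0.
by rewrite (mx_pow_hsym (Cayley_Hamilton2 sp)) !mxE /= mulr0n add0r subr0 mulr1.
Qed.

Lemma has_jordan_form_block_unbounded M l : `|l| = 1 ->
  has_jordan_form_block M l -> ~ bounded_set (orbit_Id M).
Proof.
move=> l1 [P [Pu ->]] /bounded_orbit_IdP [B MB].
set J := jordan_block2 l.
have Jk k : J ^+ k = invmx P *m (P *m J *m invmx P) ^+ k *m P.
  by rewrite mx_conj_pow // !mulmxA mulVmx // mul1mx mulmxKV.
set C := `|invmx P| * B * `|P| *+ 2 *+ 2.
have C0 : 0 <= C by rewrite !mulrn_wge0 // !mulr_ge0 // (le_trans _ (MB 0%N)).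
have [k kC] := complex_archi (ger0_real C0).
have J2k : `|(J ^+ (2 ^ k)) 0 1| = (2 ^ k)%:R.
  have k0 : (0 < 2 ^ k)%N by rewrite expn_gt0.
  rewrite jordan_block2_pow -(prednK k0) hsym_diag normrM normrX l1.
  by rewrite expr1n mulr1 normr_nat.
have C2k : (2 ^ k)%:R <= C.
  rewrite -J2k Jk; apply: le_trans (mx_norm_entry_le _ 0 1) _.
  apply: le_trans (mulmx_norm_le _ _) _; rewrite /C lerMn2r /=.
  apply: le_trans (ler_wpM2r (normr_ge0 P) (mulmx_norm_le _ _)) _.
  by rewrite mulrnAl lerMn2r /= ler_wpM2r // ler_wpM2l.
have k2k : (k%:R : CC) < (2 ^ k)%:R by rewrite ltr_nat ltn_expl.
by have := lt_le_trans (lt_trans kC k2k) C2k; rewrite ltxx.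
Qed.

Lemma has_jordan_form_block_sq0 M a : (M - a%:M) *m (M - a%:M) = 0 ->
  M != a%:M -> has_jordan_form_block M a.
Proof.
have [N ->] : exists N, M = N + a%:M by exists (M - a%:M); rewrite subrK.
rewrite addrK -subr_eq0 addrK => /matrixP N2 N_neq0.
have Nsq i j : N i 0 * N 0 j + N i 1 * N 1 j = 0.
  by have := N2 i j; rewrite mulmx2E mxE.
have similar P Q : P *m Q = 1%:M -> (N + a%:M) *m P = P *m jordan_block2 a ->
    has_jordan_form_block (N + a%:M) a.
  move=> PQ MP; have [Pu _] := mulmx1_unit PQ.
  by exists P; split => //; rewrite -MP mulmxK.
(* If [N w != 0] for a basis vector [w], then [P = (N w | w)] conjugates [M]
   to the Jordan block; [Q] is its inverse. *)
have [N10 | N10] := eqVneq (N 1 0) 0; last first.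
  apply: (similar (\matrix_(i, j) if j == 0 then N i 0 else (i == 0)%:R)
            (\matrix_(i, j) if i == 0 then (j == 1)%:R / N 1 0
                            else (j == 0)%:R - (j == 1)%:R * N 0 0 / N 1 0)).
    by apply: mx2_ext; rewrite mulmx2E !mxE /=; field.
  apply: mx2_ext; rewrite !mulmx2E !mxE /= ?mulr1n ?mulr0n; try ring.
    by apply/subr0_eq; rewrite -[RHS](Nsq 0 0); ring.
  by apply/subr0_eq; rewrite -[RHS](Nsq 1 0); ring.
have [N01 | N01] := eqVneq (N 0 1) 0; last first.
  apply: (similar (\matrix_(i, j) if j == 0 then N i 1 else (i == 1)%:R)
            (\matrix_(i, j) if i == 0 then (j == 0)%:R / N 0 1
                            else (j == 1)%:R - (j == 0)%:R * N 1 1 / N 0 1)).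
    by apply: mx2_ext; rewrite mulmx2E !mxE /=; field.
  apply: mx2_ext; rewrite !mulmx2E !mxE /= ?mulr1n ?mulr0n; try ring.
    by apply/subr0_eq; rewrite -[RHS](Nsq 0 1); ring.
  by apply/subr0_eq; rewrite -[RHS](Nsq 1 1); ring.
have sq_eq0 (x : CC) : x * x = 0 -> x = 0 by move/eqP; rewrite mulf_eq0 orbb => /eqP.
case/eqP: N_neq0; apply: mx2_ext; rewrite ?mxE //; apply: sq_eq0.
  by rewrite -(Nsq 0 0) N10 mulr0 addr0.
by rewrite -(Nsq 1 1) N01 mulr0 add0r.
Qed.

Lemma bounded_orbit_IdI M a c : (M - c%:M) *m (M - a%:M) = 0 -> `|a| <= 1 ->
  (exists P, forall n, `|hsym a c n| * `|M - a%:M| <= P) ->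
  bounded_set (orbit_Id M).
Proof.
move=> CH a1 [P hP]; apply/bounded_orbit_IdP; exists (1 + P) => k.
by apply: le_trans (mx_pow_norm_le CH _) _; rewrite lerD ?exprn_ile1.
Qed.

Lemma spectrum_le1_bounded_orbit M a c : spectrum2 M a c -> `|a| <= 1 -> `|c| <= 1 ->
  ~ (exists l : CC, `|l| = 1 /\ has_jordan_form_block M l) ->
  bounded_set (orbit_Id M).
Proof.
move=> sp a1 c1 noJ; have CH := Cayley_Hamilton2 (spectrum2C sp).
have [-> | M_neq_a] := eqVneq M a%:M.
  apply: (@bounded_orbit_IdI _ a a); rewrite ?subrr ?mul0mx //.
  by exists 0 => n; rewrite normr0 mulr0.
have [B hB] : exists B, forall n, `|hsym a c n| <= B.
  apply: hsym_bounded => //; have [ac | ] := eqVneq a c; [right | by left].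
  rewrite real_ltNge ?normr_real //; apply/negP => a_ge1; apply: noJ.
  exists a; split; first by apply/eqP; rewrite eq_le a1.
  by apply: has_jordan_form_block_sq0 M_neq_a; rewrite {1}ac.
apply: bounded_orbit_IdI CH a1 _; exists (B * `|M - a%:M|) => n.
by rewrite ler_wpM2r.
Qed.

End SquaringMap.

Theorem proposition3p5 (R : realType) :
  (forall M : 'M[C R]_2, bounded_set (orbit_Id M) -> closure (@Ws_Id R) M) /\
  (forall M : 'M[C R]_2, closure (@Ws_Id R) M ->
     (bounded_set (orbit_Id M) <->
      ~ (exists l : C R, `|l| = 1 /\ has_jordan_form_block M l))).
Proof.
split=> [M | M clM]; first exact: bounded_orbit_Id_closure.
have [a [c sp]] := spectrum2_exists M.
split=> [bM [l [l1 Jl]] | noJ]; first exact: has_jordan_form_block_unbounded l1 Jl bM.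
apply: (spectrum_le1_bounded_orbit sp _ _ noJ).
  exact: closure_Ws_Id_spectrum_le1 sp.
exact: closure_Ws_Id_spectrum_le1 (spectrum2C sp).
Qed.
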